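(* Let $k\ge3$ and let $D\subseteq\mathbb{D}$ be an open set with the $k$-th Hindmarsh property. If $\mathcal{Z}\subset D$ is a discrete set in $D$, then $D\setminus\mathcal{Z}$ also has the $k$-th Hindmarsh property.
   Context: $\mathbb{D}$ is the open unit disk. A set $\mathcal{Z}\subset D$ is discrete in $D$ if it is at most countable with no accumulation points in $D$. A Schur function is an analytic $S:\mathbb{D}\to\mathbb{C}$ with $|S|\le1$. Pick matrix: $P_k(f;z_1,\dots,z_k)=\left[\frac{1-f(z_i)\overline{f(z_j)}}{1-z_i\overline{z_j}}\right]_{i,j=1}^k$. For an integer $k\ge3$, an open set $D\subseteq\mathbb{D}$ has the $k$-th Hindmarsh property if every function $f:D\to\mathbb{C}$ such that $P_k(f;z_1,\dots,z_k)$ is positive semidefinite for every choice of distinct $z_1,\dots,z_k\in D$ admits an extension to a Schur function on $\mathbb{D}$. Hindmarsh's theorem (may be assumed): if $U\subseteq\mathbb{D}$ is open and $f:U\to\mathbb{C}$ has $P_3(f;z_1,z_2,z_3)\ge0$ for all $z_1,z_2,z_3\in U$, then $f$ is analytic on $U$ with $|f|\le1$. *)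

From Stdlib Require Import Reals.
From Coquelicot Require Import Coquelicot.
Open Scope R_scope.

Fixpoint csum (n : nat) (f : nat -> C) : C :=
  match n with
  | O => 0%C
  | S m => Cplus (csum m f) (f m)
  end.

Definition unit_disk (z : C) : Prop := Cmod z < 1.

Definition C_open (D : C -> Prop) : Prop :=
  forall z, D z -> exists r, 0 < r /\ forall w, Cmod (Cminus w z) < r -> D w.

Definition schur_function (S : C -> C) : Prop :=
  (forall z, unit_disk z -> ex_derive (K := C_AbsRing) S z) /\
  (forall z, unit_disk z -> Cmod (S z) <= 1).

Definition pick_entry (f : C -> C) (zs : nat -> C) (i j : nat) : C :=
  Cdiv (Cminus 1 (Cmult (f (zs i)) (Cconj (f (zs j)))))
       (Cminus 1 (Cmult (zs i) (Cconj (zs j)))).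

Definition psd (k : nat) (M : nat -> nat -> C) : Prop :=
  forall c : nat -> C,
    let q := csum k (fun i => csum k (fun j => Cmult (Cmult (Cconj (c i)) (M i j)) (c j))) in
    Im q = 0 /\ 0 <= Re q.

(* the k-th Hindmarsh property of D (D is assumed open, D ⊆ unit disk, separately) *)
Definition hindmarsh_property (k : nat) (D : C -> Prop) : Prop :=
  forall f : C -> C,
    (forall zs : nat -> C,
        (forall i, (i < k)%nat -> D (zs i)) ->
        (forall i j, (i < k)%nat -> (j < k)%nat -> i <> j -> zs i <> zs j) ->
        psd k (pick_entry f zs)) ->
    exists S : C -> C, schur_function S /\ forall z, D z -> S z = f z.

Definition discrete_in (D Z : C -> Prop) : Prop :=
  (forall z, Z z -> D z) /\
  (exists g : nat -> C, forall z, Z z -> exists n, g n = z) /\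
  (forall w, D w -> exists r, 0 < r /\
      forall z, Z z -> Cmod (Cminus z w) < r -> z = w).

(* The 2 x 2 principal minors of the Pick matrices of f on E = D \ Z already give the
   Schwarz-Pick estimate |f a - f b|^2 (1 - |a|^2) (1 - |b|^2) <= |a - b|^2 on E; the other
   k - 2 points are placed next to a only to make the k points distinct.  Every z in D is the
   limit of z + 1/(n+1), and these points eventually lie in E because Z is discrete, so the
   estimate makes f (z + 1/(n+1)) a Cauchy sequence whose limit F z equals f z on E.  A Pick
   matrix of F at points of D is the limit of Pick matrices of f at the shifted points, hence
   positive semidefinite, and the Hindmarsh property of D applied to F gives the extension. *)

From Stdlib Require Import Reals Lra Lia Psatz Classical.
From Coquelicot Require Import Coquelicot.
Open Scope R_scope.

Definition sqnorm (z : C) : R := Re z ^ 2 + Im z ^ 2.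

Lemma sqnorm_ge0 (z : C) : 0 <= sqnorm z.
Proof. unfold sqnorm; nra. Qed.

Lemma sqnorm_pos (z : C) : z <> 0%C -> 0 < sqnorm z.
Proof.
  intro Hz; destruct z as [x y]; unfold sqnorm, Re, Im; simpl.
  destruct (Req_dec x 0) as [->|]; [destruct (Req_dec y 0) as [->|]|]; [easy | nra | nra].
Qed.

Lemma sqnorm_lt_1 (z : C) : unit_disk z -> sqnorm z < 1.
Proof. unfold unit_disk, Cmod; intro H; rewrite <- sqrt_1 in H; now apply sqrt_lt_0_alt. Qed.

Lemma sqnorm_div (x y : C) : y <> 0%C -> sqnorm (Cdiv x y) = sqnorm x / sqnorm y.
Proof.
  intro Hy; pose proof (sqnorm_pos y Hy) as Hpos.
  destruct x, y; unfold sqnorm, Re, Im in *; simpl in *; field; lra.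
Qed.

Lemma sqnorm_one_sub_mul_conj (a b : C) :
  sqnorm (Cminus 1 (Cmult a (Cconj b))) = (1 - sqnorm a) * (1 - sqnorm b) + sqnorm (Cminus a b).
Proof. destruct a, b; unfold sqnorm, Re, Im; simpl; ring. Qed.

Lemma one_sub_mul_conj_self (z : C) : Cminus 1 (Cmult z (Cconj z)) = RtoC (1 - sqnorm z).
Proof. destruct z; unfold sqnorm, Re, Im, RtoC; apply injective_projections; simpl; ring. Qed.

Lemma one_sub_mul_conj_neq0 (z w : C) :
  sqnorm z < 1 -> sqnorm w < 1 -> Cminus 1 (Cmult z (Cconj w)) <> 0%C.
Proof.
  intros Hz Hw E; pose proof (sqnorm_one_sub_mul_conj z w) as Id.
  rewrite E in Id; pose proof (sqnorm_ge0 (Cminus z w)).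
  unfold sqnorm at 1 in Id; simpl in Id; nra.
Qed.

Lemma Rabs_Re_Im_lt_of_sqnorm (w : C) (eps : R) :
  0 < eps -> sqnorm w < eps ^ 2 -> Rabs (Re w) < eps /\ Rabs (Im w) < eps.
Proof.
  intros Heps Hw; unfold sqnorm in Hw.
  rewrite <- (Rabs_pos_eq eps) by lra.
  split; apply Rsqr_lt_abs_0; unfold Rsqr; nra.
Qed.

Definition inv_succ (n : nat) : R := / INR (S n).

Lemma inv_succ_pos n : 0 < inv_succ n.
Proof. apply Rinv_0_lt_compat, lt_0_INR; lia. Qed.

Lemma inv_succ_inj n m : inv_succ n = inv_succ m -> n = m.
Proof.
  unfold inv_succ; intro E.
  apply (f_equal Rinv) in E; rewrite !Rinv_inv in E.
  now apply INR_eq, eq_add_S in E.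
Qed.

Lemma is_lim_seq_inv_succ : is_lim_seq inv_succ 0.
Proof.
  apply (is_lim_seq_inv _ p_infty); [|discriminate].
  apply (is_lim_seq_incr_1 INR), is_lim_seq_INR.
Qed.

Lemma eventually_inv_succ_lt eps : 0 < eps -> eventually (fun n => inv_succ n < eps).
Proof.
  intro Heps.
  destruct (proj2 (is_lim_seq_spec _ _) is_lim_seq_inv_succ (mkposreal eps Heps)) as [N HN].
  exists N; intros n Hn; specialize (HN n Hn); simpl in HN.
  rewrite Rminus_0_r, Rabs_pos_eq in HN; [exact HN | apply Rlt_le, inv_succ_pos].
Qed.

Lemma eventually_forall_lt (k : nat) (P : nat -> nat -> Prop) :
  (forall i, (i < k)%nat -> eventually (P i)) ->
  eventually (fun n => forall i, (i < k)%nat -> P i n).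
Proof.
  induction k as [|k IHk]; intro H.
  - exists 0%nat; intros; lia.
  - destruct (IHk (fun i Hi => H i (Nat.lt_lt_succ_r _ _ Hi))) as [N1 H1].
    destruct (H k (Nat.lt_succ_diag_r k)) as [N2 H2].
    exists (Nat.max N1 N2); intros n Hn i Hi.
    destruct (Nat.eq_dec i k) as [->|]; [apply H2 | apply H1]; lia.
Qed.

Definition is_lim_seqC (u : nat -> C) (l : C) : Prop :=
  is_lim_seq (fun n => Re (u n)) (Re l) /\ is_lim_seq (fun n => Im (u n)) (Im l).

Lemma is_lim_seqC_const (c : C) : is_lim_seqC (fun _ => c) c.
Proof. split; apply is_lim_seq_const. Qed.

Lemma is_lim_seqC_plus u v a b :
  is_lim_seqC u a -> is_lim_seqC v b -> is_lim_seqC (fun n => Cplus (u n) (v n)) (Cplus a b).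
Proof. intros [Hu1 Hu2] [Hv1 Hv2]; split; now apply is_lim_seq_plus'. Qed.

Lemma is_lim_seqC_minus u v a b :
  is_lim_seqC u a -> is_lim_seqC v b -> is_lim_seqC (fun n => Cminus (u n) (v n)) (Cminus a b).
Proof. intros [Hu1 Hu2] [Hv1 Hv2]; split; now apply is_lim_seq_minus'. Qed.

Lemma is_lim_seqC_mult u v a b :
  is_lim_seqC u a -> is_lim_seqC v b -> is_lim_seqC (fun n => Cmult (u n) (v n)) (Cmult a b).
Proof.
  intros [Hu1 Hu2] [Hv1 Hv2]; split; simpl.
  - apply is_lim_seq_minus'; now apply is_lim_seq_mult'.
  - apply is_lim_seq_plus'; now apply is_lim_seq_mult'.
Qed.

Lemma is_lim_seqC_conj u a : is_lim_seqC u a -> is_lim_seqC (fun n => Cconj (u n)) (Cconj a).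
Proof. intros [Hu1 Hu2]; split; [exact Hu1 | exact (proj1 (is_lim_seq_opp _ _) Hu2)]. Qed.

Lemma is_lim_seqC_inv u a :
  is_lim_seqC u a -> a <> 0%C -> is_lim_seqC (fun n => Cinv (u n)) (Cinv a).
Proof.
  intros [Hu1 Hu2] Ha.
  assert (Hs : is_lim_seq (fun n => sqnorm (u n)) (sqnorm a)).
  { unfold sqnorm; simpl; rewrite !Rmult_1_r.
    apply (is_lim_seq_ext (fun n => Re (u n) * Re (u n) + Im (u n) * Im (u n))).
    { intro n; simpl; ring. }
    apply is_lim_seq_plus'; apply is_lim_seq_mult'; assumption. }
  assert (Ha' := Rgt_not_eq _ _ (sqnorm_pos a Ha)).
  split; apply is_lim_seq_div'; try assumption.
  exact (proj1 (is_lim_seq_opp _ _) Hu2).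
Qed.

Lemma is_lim_seqC_div u v a b :
  is_lim_seqC u a -> is_lim_seqC v b -> b <> 0%C ->
  is_lim_seqC (fun n => Cdiv (u n) (v n)) (Cdiv a b).
Proof. intros Hu Hv Hb; apply is_lim_seqC_mult; [|apply is_lim_seqC_inv]; assumption. Qed.

Lemma is_lim_seqC_csum k (u : nat -> nat -> C) (l : nat -> C) :
  (forall i, (i < k)%nat -> is_lim_seqC (fun n => u n i) (l i)) ->
  is_lim_seqC (fun n => csum k (u n)) (csum k l).
Proof.
  induction k as [|k IHk]; intro H; simpl.
  - apply is_lim_seqC_const.
  - apply is_lim_seqC_plus; [apply IHk; intros i Hi |]; apply H; lia.
Qed.

Lemma is_lim_seqC_of_sqnorm (u : nat -> C) (l : C) :
  (forall eps : posreal, eventually (fun n => sqnorm (Cminus (u n) l) < eps ^ 2)) ->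
  is_lim_seqC u l.
Proof.
  intro H; split; apply is_lim_seq_spec; intro eps; destruct (H eps) as [N HN];
    exists N; intros n Hn; apply (Rabs_Re_Im_lt_of_sqnorm _ _ (cond_pos eps) (HN n Hn)).
Qed.

Definition lim_seqC (u : nat -> C) : C :=
  (real (Lim_seq (fun n => Re (u n))), real (Lim_seq (fun n => Im (u n)))).

Lemma is_lim_seqC_unique (u : nat -> C) (l : C) : is_lim_seqC u l -> lim_seqC u = l.
Proof.
  intros [HRe HIm]; unfold lim_seqC.
  rewrite (is_lim_seq_unique _ _ HRe), (is_lim_seq_unique _ _ HIm).
  now destruct l.
Qed.

Lemma is_lim_seqC_cauchy (u : nat -> C) :
  (forall eps : posreal, exists N, forall n m, (N <= n)%nat -> (N <= m)%nat ->
     sqnorm (Cminus (u n) (u m)) < eps ^ 2) ->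
  is_lim_seqC u (lim_seqC u).
Proof.
  intro H.
  assert (Hlim : forall r : nat -> R, ex_lim_seq_cauchy r -> is_lim_seq r (real (Lim_seq r))).
  { intros r Hr; apply ex_lim_seq_cauchy_corr in Hr; destruct Hr as [l Hl].
    now rewrite (is_lim_seq_unique _ _ Hl). }
  split; apply Hlim; intro eps; destruct (H eps) as [N HN];
    exists N; intros n m Hn Hm; apply (Rabs_Re_Im_lt_of_sqnorm _ _ (cond_pos eps) (HN n m Hn Hm)).
Qed.

Lemma csum_ext k (g h : nat -> C) :
  (forall i, (i < k)%nat -> g i = h i) -> csum k g = csum k h.
Proof.
  induction k as [|k IHk]; intro H; simpl; [reflexivity|].
  rewrite IHk, H; auto.
Qed.

Lemma csum_pad m k (g : nat -> C) :
  (m <= k)%nat -> (forall i, (m <= i < k)%nat -> g i = 0%C) -> csum k g = csum m g.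
Proof.
  induction k as [|k IHk]; intros Hmk H.
  - now replace m with 0%nat by lia.
  - destruct (Nat.eq_dec m (S k)) as [->|Hm]; [reflexivity|].
    simpl; rewrite H, Cplus_0_r by lia.
    apply IHk; [lia | intros; apply H; lia].
Qed.

Lemma psd_leading m k (M : nat -> nat -> C) : (m <= k)%nat -> psd k M -> psd m M.
Proof.
  intros Hmk H c.
  set (c' := fun i => if Nat.ltb i m then c i else 0%C).
  assert (Hc' : forall i, (i < m)%nat -> c' i = c i)
    by (intros i Hi; unfold c'; now rewrite (proj2 (Nat.ltb_lt i m) Hi)).
  assert (Hc0 : forall i, (m <= i)%nat -> c' i = 0%C)
    by (intros i Hi; unfold c'; now rewrite (proj2 (Nat.ltb_ge i m) Hi)).
  assert (Hterm : forall x y : C, Cmult (Cmult (Cconj 0) x) y = 0%C /\ Cmult (Cmult x y) 0 = 0%C)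
    by (intros; split; apply injective_projections; simpl; ring).
  assert (Hrow : forall i, (i < m)%nat ->
    csum k (fun j => Cmult (Cmult (Cconj (c' i)) (M i j)) (c' j)) =
    csum m (fun j => Cmult (Cmult (Cconj (c i)) (M i j)) (c j))).
  { intros i Hi; rewrite (csum_pad m k); [|exact Hmk|].
    - apply csum_ext; intros j Hj; now rewrite !Hc'.
    - intros j Hj; rewrite (Hc0 j) by lia; apply Hterm. }
  specialize (H c'); cbv zeta in *.
  rewrite (csum_pad m k), (csum_ext m _ _ Hrow) in H; [exact H | exact Hmk |].
  intros i Hi; rewrite (csum_pad 0 k); [reflexivity | lia |].
  intros j _; rewrite (Hc0 i) by lia; apply Hterm.
Qed.

Lemma psd_lim k (M : nat -> nat -> nat -> C) (L : nat -> nat -> C) :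
  eventually (fun n => psd k (M n)) ->
  (forall i j, (i < k)%nat -> (j < k)%nat -> is_lim_seqC (fun n => M n i j) (L i j)) ->
  psd k L.
Proof.
  intros Hev HM c.
  set (q := fun A : nat -> nat -> C =>
    csum k (fun i => csum k (fun j => Cmult (Cmult (Cconj (c i)) (A i j)) (c j)))).
  assert (Hq : is_lim_seqC (fun n => q (M n)) (q L)).
  { apply is_lim_seqC_csum; intros i Hi; apply is_lim_seqC_csum; intros j Hj.
    apply is_lim_seqC_mult; [apply is_lim_seqC_mult|]; auto using is_lim_seqC_const. }
  destruct Hq as [HRe HIm]; fold (q L); split.
  - assert (H0 : is_lim_seq (fun n => Im (q (M n))) 0).
    { apply (is_lim_seq_ext_loc (fun _ => 0)); [|apply is_lim_seq_const].
      destruct Hev as [N HN]; exists N; intros n Hn; symmetry; apply (HN n Hn c). }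
    apply is_lim_seq_unique in H0, HIm; rewrite HIm in H0; now injection H0.
  - apply (is_lim_seq_le_loc (fun _ => 0) (fun n => Re (q (M n))) 0 (Re (q L)));
      [|apply is_lim_seq_const | exact HRe].
    destruct Hev as [N HN]; exists N; intros n Hn; apply (HN n Hn c).
Qed.

Lemma psd2_hermitian (M : nat -> nat -> C) (a b : R) :
  psd 2 M -> M 0%nat 0%nat = RtoC a -> M 1%nat 1%nat = RtoC b ->
  M 1%nat 0%nat = Cconj (M 0%nat 1%nat) ->
  0 <= a /\ 0 <= b /\ sqnorm (M 0%nat 1%nat) <= a * b.
Proof.
  intros H H00 H11 H10.
  destruct (M 0%nat 1%nat) as [m1 m2] eqn:H01.
  assert (Hq : forall x0 y0 x1 y1 : R,
    0 <= a * (x0 ^ 2 + y0 ^ 2) + b * (x1 ^ 2 + y1 ^ 2)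
         + 2 * ((x0 * m1 + y0 * m2) * x1 - (x0 * m2 - y0 * m1) * y1)).
  { intros x0 y0 x1 y1.
    destruct (H (fun i => match i with 0%nat => (x0, y0) | _ => (x1, y1) end)) as [_ Hre].
    simpl in Hre; rewrite H00, H11, H10, H01 in Hre; simpl in Hre; nra. }
  assert (Ha := Hq 1 0 0 0); assert (Hb := Hq 0 0 1 0).
  assert (Hs : forall s, 0 <= a * s ^ 2 - 2 * s * sqnorm (m1, m2) + b * sqnorm (m1, m2)).
  { intro s; specialize (Hq s 0 (- m1) m2); unfold sqnorm, Re, Im; simpl in *; nra. }
  assert (Hm := sqnorm_ge0 (m1, m2)).
  split; [nra | split; [nra|]].
  destruct (Req_dec b 0) as [Hb0|Hb0].
  - set (s := sqnorm (m1, m2) / (a + 1)).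
    assert (Hsm : s * (a + 1) = sqnorm (m1, m2)) by (unfold s; field; lra).
    specialize (Hs s); subst b; nra.
  - specialize (Hs b); nra.
Qed.

Lemma schwarz_pick_of_minor (a b z w s t : R) :
  z < 1 -> w < 1 -> 0 <= a -> 0 <= b -> 0 <= t ->
  0 <= (1 - a) / (1 - z) -> 0 <= (1 - b) / (1 - w) ->
  ((1 - a) * (1 - b) + s) / ((1 - z) * (1 - w) + t) <= (1 - a) / (1 - z) * ((1 - b) / (1 - w)) ->
  s * ((1 - z) * (1 - w)) <= t.
Proof.
  intros Hz Hw Ha Hb Ht HA HB Hm.
  assert (0 <= 1 - a) by (replace (1 - a) with ((1 - a) / (1 - z) * (1 - z)) by (field; lra); nra).
  assert (0 <= 1 - b) by (replace (1 - b) with ((1 - b) / (1 - w) * (1 - w)) by (field; lra); nra).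
  set (Dn := (1 - z) * (1 - w) + t) in Hm.
  apply (Rmult_le_compat_r (Dn * ((1 - z) * (1 - w)))) in Hm; [|apply Rmult_le_pos; unfold Dn; nra].
  replace (((1 - a) * (1 - b) + s) / Dn * (Dn * ((1 - z) * (1 - w))))
    with (((1 - a) * (1 - b) + s) * ((1 - z) * (1 - w))) in Hm by (field; unfold Dn; nra).
  replace ((1 - a) / (1 - z) * ((1 - b) / (1 - w)) * (Dn * ((1 - z) * (1 - w))))
    with ((1 - a) * (1 - b) * Dn) in Hm by (field; lra).
  assert ((1 - a) * (1 - b) * t <= t) by (assert ((1 - a) * (1 - b) <= 1) by nra; nra).
  unfold Dn in Hm; nra.
Qed.

Lemma pick_two_point_bound k (f : C -> C) (zs : nat -> C) :
  (2 <= k)%nat -> psd k (pick_entry f zs) ->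
  sqnorm (zs 0%nat) < 1 -> sqnorm (zs 1%nat) < 1 ->
  sqnorm (Cminus (f (zs 0%nat)) (f (zs 1%nat))) * ((1 - sqnorm (zs 0%nat)) * (1 - sqnorm (zs 1%nat)))
  <= sqnorm (Cminus (zs 0%nat) (zs 1%nat)).
Proof.
  intros Hk H Hz Hw.
  assert (Hdiag : forall i, sqnorm (zs i) < 1 ->
    pick_entry f zs i i = RtoC ((1 - sqnorm (f (zs i))) / (1 - sqnorm (zs i)))).
  { intros i Hi; unfold pick_entry; rewrite !one_sub_mul_conj_self, RtoC_div; [reflexivity | lra]. }
  assert (Hconj : pick_entry f zs 1%nat 0%nat = Cconj (pick_entry f zs 0%nat 1%nat)).
  { unfold pick_entry; rewrite Cdiv_conj by (apply one_sub_mul_conj_neq0; assumption).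
    f_equal; destruct (f (zs 0%nat)), (f (zs 1%nat)), (zs 0%nat), (zs 1%nat);
      apply injective_projections; simpl; ring. }
  destruct (psd2_hermitian _ _ _ (psd_leading 2 k _ Hk H) (Hdiag 0%nat Hz) (Hdiag 1%nat Hw) Hconj)
    as [HA [HB Hm]].
  unfold pick_entry in Hm.
  rewrite sqnorm_div, !sqnorm_one_sub_mul_conj in Hm by (apply one_sub_mul_conj_neq0; assumption).
  apply schwarz_pick_of_minor with (sqnorm (f (zs 0%nat))) (sqnorm (f (zs 1%nat)));
    auto using sqnorm_ge0.
Qed.

Definition shift (z : C) (n : nat) : C := Cplus z (RtoC (inv_succ n)).

Lemma shift_sub (z : C) n : Cminus (shift z n) z = RtoC (inv_succ n).
Proof. unfold shift; ring. Qed.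

Lemma shift_neq (z : C) n : shift z n <> z.
Proof.
  intro E; pose proof (f_equal Re (shift_sub z n)) as Hre.
  rewrite E in Hre; simpl in Hre; pose proof (inv_succ_pos n); lra.
Qed.

Lemma shift_inj (z : C) n m : shift z n = shift z m -> n = m.
Proof.
  intro E; apply inv_succ_inj.
  apply (f_equal (fun w => Re (Cminus w z))) in E; rewrite !shift_sub in E; exact E.
Qed.

Lemma shift_cancel (z w : C) n : shift z n = shift w n -> z = w.
Proof.
  intro E; apply (f_equal (fun u => Cminus u (RtoC (inv_succ n)))) in E.
  unfold shift in E; now ring_simplify in E.
Qed.

Lemma sqnorm_shift_sub (z : C) n m :
  sqnorm (Cminus (shift z n) (shift z m)) = (inv_succ n - inv_succ m) ^ 2.
Proof. destruct z; unfold sqnorm, shift, Re, Im; simpl; ring. Qed.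

Lemma one_sub_sqnorm_shift (z : C) n :
  sqnorm z < 1 -> inv_succ n <= (1 - sqnorm z) / 4 -> (1 - sqnorm z) / 4 <= 1 - sqnorm (shift z n).
Proof.
  pose proof (inv_succ_pos n).
  destruct z as [x y]; unfold sqnorm, shift, Re, Im; simpl; intros Hz Ht.
  assert (x * x <= 1) by nra.
  assert (x * inv_succ n <= inv_succ n) by nra.
  nra.
Qed.

Lemma is_lim_seqC_shift (z : C) : is_lim_seqC (shift z) z.
Proof.
  split.
  - pose proof (is_lim_seq_plus' _ _ _ _ (is_lim_seq_const (Re z)) is_lim_seq_inv_succ) as H.
    rewrite Rplus_0_r in H; exact H.
  - pose proof (is_lim_seq_plus' _ _ _ _ (is_lim_seq_const (Im z)) (is_lim_seq_const 0)) as H.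
    rewrite Rplus_0_r in H; exact H.
Qed.

Lemma eventually_shift_in_diff (D Z : C -> Prop) (z : C) :
  C_open D -> discrete_in D Z -> D z ->
  eventually (fun n => D (shift z n) /\ ~ Z (shift z n)).
Proof.
  intros Hopen [_ [_ Hdisc]] Hz.
  destruct (Hopen z Hz) as [r1 [Hr1 HD]]; destruct (Hdisc z Hz) as [r2 [Hr2 HZ]].
  destruct (eventually_inv_succ_lt (Rmin r1 r2) (Rmin_pos _ _ Hr1 Hr2)) as [N HN].
  exists N; intros n Hn.
  assert (Hmod : Cmod (Cminus (shift z n) z) < Rmin r1 r2).
  { rewrite shift_sub, Cmod_R, Rabs_pos_eq by apply Rlt_le, inv_succ_pos; apply HN, Hn. }
  split.
  - apply HD; eapply Rlt_le_trans; [exact Hmod | apply Rmin_l].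
  - intro HZn; apply (shift_neq z n), HZ; [exact HZn |].
    eapply Rlt_le_trans; [exact Hmod | apply Rmin_r].
Qed.

Lemma lt_sq_of_weighted_bound (s p q d c eps : R) :
  0 < c -> c <= p -> c <= q -> 0 <= s -> s * (p * q) <= d ^ 2 -> Rabs d < eps * c -> s < eps ^ 2.
Proof.
  intros Hc Hp Hq Hs Hb Hd.
  assert (d ^ 2 < (eps * c) ^ 2).
  { rewrite <- (pow2_abs d); pose proof (Rabs_pos d); nra. }
  assert (s * (c * c) <= s * (p * q)) by (apply Rmult_le_compat_l; nra).
  nra.
Qed.

Definition pick_psd_on (k : nat) (E : C -> Prop) (f : C -> C) : Prop :=
  forall zs : nat -> C,
    (forall i, (i < k)%nat -> E (zs i)) ->
    (forall i j, (i < k)%nat -> (j < k)%nat -> i <> j -> zs i <> zs j) ->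
    psd k (pick_entry f zs).

(* Junk where the componentwise limits do not exist; it is only used at points of D. *)
Definition right_limit (f : C -> C) (z : C) : C := lim_seqC (fun n => f (shift z n)).

Section RightLimit.

Variables (k : nat) (D E : C -> Prop) (f : C -> C).
Hypothesis k_ge2 : (2 <= k)%nat.
Hypothesis D_disk : forall z, D z -> sqnorm z < 1.
Hypothesis E_sub_D : forall z, E z -> D z.
Hypothesis E_shift : forall z, D z -> eventually (fun n => E (shift z n)).
Hypothesis f_pick : pick_psd_on k E f.

Lemma pick_pair_bound (a b : C) : E a -> E b ->
  sqnorm (Cminus (f a) (f b)) * ((1 - sqnorm a) * (1 - sqnorm b)) <= sqnorm (Cminus a b).
Proof.
  intros Ha Hb.
  destruct (classic (a = b)) as [<-|Hab].
  { replace (Cminus a a) with (RtoC 0) by ring; replace (Cminus (f a) (f a)) with (RtoC 0) by ring.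
    unfold sqnorm; simpl; lra. }
  assert (Hdist : 0 < Cmod (Cminus b a)).
  { apply Cmod_gt_0; intro E0; apply Hab.
    apply (f_equal (fun w => Cplus w a)) in E0; ring_simplify in E0; now symmetry. }
  destruct (filter_and _ _ (E_shift a (E_sub_D a Ha)) (eventually_inv_succ_lt _ Hdist))
    as [N HN].
  assert (Hfar : forall i, shift a (N + i) <> b).
  { intros i E0; destruct (HN (N + i)%nat ltac:(lia)) as [_ Hlt].
    rewrite <- E0, shift_sub, Cmod_R, Rabs_pos_eq in Hlt by apply Rlt_le, inv_succ_pos; lra. }
  set (zs := fun i => match i with 0%nat => a | 1%nat => b | S (S i) => shift a (N + i) end).
  assert (Hpsd : psd k (pick_entry f zs)).
  { apply f_pick.
    - intros [|[|i]] _; [exact Ha | exact Hb | apply HN; lia].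
    - intros [|[|i]] [|[|j]] _ _ Hij; simpl; intro Heq.
      all: try (apply shift_inj in Heq; lia).
      all: first [ congruence | exact (shift_neq a _ Heq) | exact (shift_neq a _ (eq_sym Heq)) ]. }
  exact (pick_two_point_bound k f zs k_ge2 Hpsd (D_disk a (E_sub_D a Ha)) (D_disk b (E_sub_D b Hb))).
Qed.

Lemma is_lim_seqC_right_limit (z : C) : D z ->
  is_lim_seqC (fun n => f (shift z n)) (right_limit f z).
Proof.
  intro Hz; apply is_lim_seqC_cauchy; intro eps.
  set (c := (1 - sqnorm z) / 4).
  assert (Hc : 0 < c) by (unfold c; pose proof (D_disk z Hz); lra).
  assert (Hec : 0 < eps * c) by (apply Rmult_lt_0_compat; [apply cond_pos | exact Hc]).
  destruct (filter_and _ _ (E_shift z Hz)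
    (filter_and _ _ (eventually_inv_succ_lt c Hc) (eventually_inv_succ_lt _ Hec))) as [N HN].
  exists N; intros n m Hn Hm.
  destruct (HN n Hn) as [En [Hn1 Hn2]]; destruct (HN m Hm) as [Em [Hm1 Hm2]].
  apply (lt_sq_of_weighted_bound _ (1 - sqnorm (shift z n)) (1 - sqnorm (shift z m))
    (inv_succ n - inv_succ m) c).
  - exact Hc.
  - apply (one_sub_sqnorm_shift z); [apply D_disk, Hz | unfold c in *; lra].
  - apply (one_sub_sqnorm_shift z); [apply D_disk, Hz | unfold c in *; lra].
  - apply sqnorm_ge0.
  - rewrite <- (sqnorm_shift_sub z); apply pick_pair_bound; assumption.
  - pose proof (inv_succ_pos n); pose proof (inv_succ_pos m); apply Rabs_def1; lra.
Qed.

Lemma right_limit_eq (z : C) : E z -> right_limit f z = f z.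
Proof.
  intro Ez; pose proof (E_sub_D z Ez) as Hz.
  apply is_lim_seqC_unique, is_lim_seqC_of_sqnorm; intro eps.
  set (c := (1 - sqnorm z) / 4).
  assert (Hc : 0 < c) by (unfold c; pose proof (D_disk z Hz); lra).
  assert (Hec : 0 < eps * c) by (apply Rmult_lt_0_compat; [apply cond_pos | exact Hc]).
  destruct (filter_and _ _ (E_shift z Hz)
    (filter_and _ _ (eventually_inv_succ_lt c Hc) (eventually_inv_succ_lt _ Hec))) as [N HN].
  exists N; intros n Hn; destruct (HN n Hn) as [En [Hn1 Hn2]].
  apply (lt_sq_of_weighted_bound _ (1 - sqnorm (shift z n)) (1 - sqnorm z) (inv_succ n) c).
  - exact Hc.
  - apply (one_sub_sqnorm_shift z); [apply D_disk, Hz | unfold c in *; lra].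
  - unfold c; pose proof (D_disk z Hz); lra.
  - apply sqnorm_ge0.
  - replace (inv_succ n ^ 2) with (sqnorm (Cminus (shift z n) z))
      by (rewrite shift_sub; unfold sqnorm; simpl; ring).
    apply pick_pair_bound; assumption.
  - pose proof (inv_succ_pos n); rewrite Rabs_pos_eq; lra.
Qed.

Lemma pick_psd_on_right_limit : pick_psd_on k D (right_limit f).
Proof.
  intros zs HD Hdist.
  apply (psd_lim k (fun n => pick_entry f (fun i => shift (zs i) n))).
  - destruct (eventually_forall_lt k (fun i n => E (shift (zs i) n))) as [N HN].
    { intros i Hi; apply E_shift, HD, Hi. }
    exists N; intros n Hn; apply f_pick.
    + intros i Hi; apply (HN n Hn i Hi).
    + intros i j Hi Hj Hij Heq; apply (Hdist i j Hi Hj Hij), (shift_cancel _ _ n Heq).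
  - intros i j Hi Hj; unfold pick_entry.
    assert (Hlim := fun l (Hl : (l < k)%nat) => is_lim_seqC_right_limit (zs l) (HD l Hl)).
    apply is_lim_seqC_div.
    + apply is_lim_seqC_minus; [apply is_lim_seqC_const |].
      apply is_lim_seqC_mult; [|apply is_lim_seqC_conj]; auto.
    + apply is_lim_seqC_minus; [apply is_lim_seqC_const |].
      apply is_lim_seqC_mult; [|apply is_lim_seqC_conj]; apply is_lim_seqC_shift.
    + apply one_sub_mul_conj_neq0; apply D_disk, HD; assumption.
Qed.

End RightLimit.

Theorem proposition6p1 (k : nat) (D Z : C -> Prop) :
  (3 <= k)%nat ->
  C_open D ->
  (forall z, D z -> unit_disk z) ->
  hindmarsh_property k D ->
  discrete_in D Z ->
  hindmarsh_property k (fun z => D z /\ ~ Z z).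
Proof.
  intros Hk Hopen Hdisk HD Hdisc f Hf.
  set (E := fun z => D z /\ ~ Z z).
  assert (k_ge2 : (2 <= k)%nat) by lia.
  assert (D_disk : forall z, D z -> sqnorm z < 1) by (intros z Hz; apply sqnorm_lt_1, Hdisk, Hz).
  assert (E_sub_D : forall z, E z -> D z) by (intros z Hz; apply Hz).
  assert (E_shift : forall z, D z -> eventually (fun n => E (shift z n)))
    by (intros z Hz; exact (eventually_shift_in_diff D Z z Hopen Hdisc Hz)).
  destruct (HD (right_limit f) (pick_psd_on_right_limit k D E f k_ge2 D_disk E_sub_D E_shift Hf))
    as [S [HS HSf]].
  exists S; split; [exact HS |]; intros z Hz.
  rewrite HSf by apply Hz.
  exact (right_limit_eq k D E f k_ge2 D_disk E_sub_D E_shift Hf z Hz).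
Qed.
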